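(* Let $x$ be a host whose flow cardinality is $N(x)$ and whose true subnet cardinality with respect to a targeted subnet of prefix length $l$ is $C(x)$, with $N(x)>C(x)$. Let $G$ be the IP segment width and $r=\lfloor l/G\rfloor$, with $r,G$ positive integers and $rG<32$. Let $\hat{C}_{full}(x)$ and $\hat{C}_{host}(x)$ be the estimated subnet cardinalities obtained by hashing full IP addresses and by hashing only host addresses, respectively, whose expected estimation errors are $$\mathbb{E}\left[|\hat{C}_{full}(x)-C(x)|\right]=2^{32}\left[1-\left(1-2^{-32}\right)^{N(x)-C(x)}\right],$$ $$\mathbb{E}\left[|\hat{C}_{host}(x)-C(x)|\right]=2^{32-rG}\left[1-\left(1-2^{rG-32}\right)^{(N(x)-C(x))(1/2)^{r}}\right].$$ Then $$\mathbb{E}\left[|\hat{C}_{full}(x)-C(x)|\right]>\mathbb{E}\left[|\hat{C}_{host}(x)-C(x)|\right].$$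
   Context: Setting: a host $x$ communicates with $N(x)$ distinct peers (32-bit IP addresses), $C(x)$ of which lie in a targeted subnet with prefix length $l$. Under the halved-segment hashing strategy, addresses are split into $G$-bit segments; a peer outside the subnet is mistakenly inferred to share the subnet prefix with probability $(1/2)^{\lfloor l/G\rfloor}$. Full-address hashing hashes entire addresses into a bitmap of size $2^{32}$ and all $N(x)-C(x)$ outside peers contaminate the count; host-address hashing hashes only the last $32-\lfloor l/G\rfloor G$ bits into a bitmap of size $2^{32-\lfloor l/G\rfloor G}$ and only the misinferred outside peers, expected number $(N(x)-C(x))(1/2)^{\lfloor l/G\rfloor}$, contaminate the count. With bitmap size $M$ and $U$ contaminating flows hashed independently and uniformly, the expected estimation error is $M[1-(1-M^{-1})^U]$, which gives the two displayed formulas. *)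

From Stdlib Require Import Reals.

From Stdlib Require Import Reals Lra Lia.
Open Scope R_scope.

(* The expected error M [1 - (1 - 1/M)^U] of a bitmap of size M is increasing in
   both M and U.  In M because, for integer U, it is the geometric sum
   sum_(i < U) (1 - 1/M)^i, whose terms grow with M; in U because (1 - 1/M)^U
   decreases in U.  Host-address hashing shrinks the bitmap from 2^32 to
   2^(32 - rG) and thins the contaminating flows from N - C to (N - C)/2^r,
   so both effects lower its error. *)

Lemma bitmap_error_geometric (m : R) (n : nat) : m <> 0 ->
  m * (1 - (1 - / m) ^ S n) = sum_f_R0 (fun i => (1 - / m) ^ i) n.
Proof.
  intro Hm.
  assert (Hinv : / m <> 0) by (apply Rinv_neq_0_compat; exact Hm).
  rewrite tech3 by lra.
  field; split; [exact Hm | lra].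
Qed.

Lemma bitmap_error_le_size (m M : R) (n : nat) : 1 <= m <= M ->
  m * (1 - (1 - / m) ^ n) <= M * (1 - (1 - / M) ^ n).
Proof.
  intros [Hm HmM].
  destruct n as [|n]; [simpl; lra|].
  rewrite !bitmap_error_geometric by lra.
  apply sum_growing; intro i; apply pow_incr.
  assert (Hinv_m : / m <= 1) by (rewrite <- Rinv_1; apply Rinv_le_contravar; lra).
  assert (Hinv_M : / M <= / m) by (apply Rinv_le_contravar; lra).
  lra.
Qed.

Lemma Rpower_lt_contravar (b x y : R) : 0 < b < 1 -> x < y ->
  Rpower b y < Rpower b x.
Proof.
  intros Hb Hxy; unfold Rpower; apply exp_increasing.
  assert (Hln : ln b < 0) by (rewrite <- ln_1; apply ln_increasing; lra).
  nra.
Qed.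

Lemma bitmap_error_lt_flows (m u v : R) : 1 < m -> u < v ->
  m * (1 - Rpower (1 - / m) u) < m * (1 - Rpower (1 - / m) v).
Proof.
  intros Hm Huv.
  assert (Hinv : 0 < / m < 1).
  { split; [apply Rinv_0_lt_compat; lra|].
    rewrite <- Rinv_1; apply Rinv_lt_contravar; lra. }
  apply Rmult_lt_compat_l; [lra|].
  assert (Hpow : Rpower (1 - / m) v < Rpower (1 - / m) u)
    by (apply Rpower_lt_contravar; lra).
  lra.
Qed.

Theorem theorem2 (N C r G : nat)
  (hNC : (C < N)%nat) (hr : (0 < r)%nat) (hG : (0 < G)%nat) (hrG : (r * G < 32)%nat) :
  (* E|C_full - C| = 2^32 [1 - (1 - 2^-32)^(N-C)] *)
  2 ^ 32 * (1 - (1 - / 2 ^ 32) ^ (N - C))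
  >
  (* E|C_host - C| = 2^(32-rG) [1 - (1 - 2^(rG-32))^((N-C)(1/2)^r)] *)
  2 ^ (32 - r * G) * (1 - Rpower (1 - / 2 ^ (32 - r * G)) (INR (N - C) * (1/2) ^ r)).
Proof.
  set (n := (N - C)%nat); set (m := 2 ^ (32 - r * G)).
  assert (Hm : 2 <= m) by (rewrite <- pow_1 at 1; apply Rle_pow; [lra | lia]).
  assert (HmM : m <= 2 ^ 32) by (apply Rle_pow; [lra | lia]).
  assert (Hthin : INR n * (1/2) ^ r < INR n).
  { assert (Hn : 0 < INR n) by (apply lt_0_INR; lia).
    assert (Hhalf : (1/2) ^ r < 1) by (apply pow_lt_1_compat; [lra | lia]).
    nra. }
  assert (Hb : 0 < 1 - / m).
  { assert (/ m <= / 2) by (apply Rinv_le_contravar; lra). lra. }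
  apply Rlt_le_trans with (m * (1 - (1 - / m) ^ n)).
  - rewrite <- (Rpower_pow n (1 - / m)) by exact Hb.
    apply bitmap_error_lt_flows; lra.
  - apply bitmap_error_le_size; lra.
Qed.
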